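(* Let $\mathcal D$ be a positively oriented Descartes configuration and let $\mathbb D(\mathcal P)$ be the set of all ordered, oriented Descartes configurations whose underlying unordered, unoriented configuration is the underlying configuration of some member of $\mathcal F(\mathcal D)$. Then $\mathbb D(\mathcal P)$ is invariant under the Apollonian group $\mathcal A$ acting by $\mathbf W_{\mathcal D'}\mapsto\mathbf U\mathbf W_{\mathcal D'}$, and it is the union of exactly $48$ orbits of $\mathcal A$; each of these orbits contains exactly one ordered, oriented representative of each unordered, unoriented Descartes configuration underlying a member of $\mathcal F(\mathcal D)$.
   Context: Oriented circles/lines, oriented curvature ($\pm1/r$, $+$ iff interior is the bounded disk; lines curvature $0$, interior the half-plane the unit normal points into). A Descartes configuration: four mutually tangent circles/lines with six distinct tangency points; oriented if interiors pairwise disjoint or so after reversing all orientations; positively oriented if interiors pairwise disjoint. Replacement: in an oriented Descartes configuration, a circle $C_i$ may be replaced by the unique other circle tangent to the remaining three at new points, oriented so the result is an oriented Descartes configuration; $\mathcal F(\mathcal D)$ is the set of configurations obtained from $\mathcal D$ by finitely many replacements. Augmented curvature-center coordinates: for center $\mathbf c$, oriented radius $r$: $\mathbf w(C)=((|\mathbf c|^2-r^2)/r,1/r,c_1/r,c_2/r)$; for the line $\mathbf x\cdot\mathbf h=m$ with interior-pointing unit normal $\mathbf h$: $(2m,0,h_1,h_2)$. $\mathbf W_{\mathcal D}$ has rows $\mathbf w(C_k)$. Known fact: $\mathcal D\mapsto\mathbf W_{\mathcal D}$ is a bijection from ordered, oriented Descartes configurations onto $\{\mathbf W:\mathbf W^T\mathbf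 Q_D\mathbf W=\mathbf Q_W\}$, with $\mathbf Q_D=\mathbf I-\frac12\mathbf 1\mathbf 1^T$, $\mathbf Q_W=\begin{pmatrix}0&-4&0&0\\-4&0&0&0\\0&0&2&0\\0&0&0&2\end{pmatrix}$; so any $\mathbf U$ with $\mathbf U^T\mathbf Q_D\mathbf U=\mathbf Q_D$ acts on ordered, oriented Descartes configurations. The Apollonian group is $\mathcal A=\langle\mathbf S_1,\mathbf S_2,\mathbf S_3,\mathbf S_4\rangle$, where $\mathbf S_i$ agrees with the $4\times4$ identity except in row $i$, which has $-1$ in position $i$ and $2$ in the other three positions (e.g. $\mathbf S_1$ has first row $(-1,2,2,2)$). *)

From HB Require Import structures.
From mathcomp Require Import all_boot all_order all_algebra.
From mathcomp Require Import reals.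
Set Implicit Arguments. Unset Strict Implicit. Unset Printing Implicit Defensive.
Import Order.TTheory GRing.Theory Num.Theory.
Local Open Scope ring_scope.

Section Descartes.
Variable R : realType.

(* Oriented circle/line in R^2:
   OCirc c r : circle of center c, oriented radius r (r <> 0);
              ointerior = bounded disk iff r > 0 (curvature 1/r).
   OLine h m : line {x | x.h = m} with unit normal h pointing into the
              ointerior, i.e. ointerior = {x | x.h > m}. *)
Inductive ocircle := OCirc of (R * R) & R | OLine of (R * R) & R.

Definition wf_ocircle (C : ocircle) : Prop :=
  match C with
  | OCirc _ r => r != 0
  | OLine h _ => h.1 ^+ 2 + h.2 ^+ 2 = 1
  end.

(* Points of the extended plane R^2 u {oo}; None is the point at infinity. *)
Definition xpoint := option (R * R).

Definition on_circle (C : ocircle) (p : xpoint) : Prop :=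
  match C, p with
  | OCirc c r, Some x => (x.1 - c.1) ^+ 2 + (x.2 - c.2) ^+ 2 = r ^+ 2
  | OCirc _ _, None => False
  | OLine h m, Some x => x.1 * h.1 + x.2 * h.2 = m
  | OLine _ _, None => True
  end.

Definition same_circle (C C' : ocircle) : Prop :=
  forall p, on_circle C p <-> on_circle C' p.

(* C and C' are tangent at p: their point sets (in the extended plane)
   meet exactly in {p} (parallel lines are tangent at oo). *)
Definition tangent_at (C C' : ocircle) (p : xpoint) : Prop :=
  [/\ on_circle C p, on_circle C' p &
      forall q, on_circle C q -> on_circle C' q -> q = p].

Definition ointerior (C : ocircle) (x : R * R) : Prop :=
  match C with
  | OCirc c r =>
      let d := (x.1 - c.1) ^+ 2 + (x.2 - c.2) ^+ 2 in
      if 0 < r then d < r ^+ 2 else r ^+ 2 < d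
  | OLine h m => m < x.1 * h.1 + x.2 * h.2
  end.

Definition reverse (C : ocircle) : ocircle :=
  match C with
  | OCirc c r => OCirc c (- r)
  | OLine h m => OLine (- h.1, - h.2) (- m)
  end.

Definition config := 'I_4 -> ocircle.

Definition descartes (E : config) : Prop :=
  [/\ forall i, wf_ocircle (E i),
      forall i j, i != j -> exists p, tangent_at (E i) (E j) p &
      forall i j k l : 'I_4, (i < j)%N -> (k < l)%N -> (i, j) != (k, l) ->
        forall p q, tangent_at (E i) (E j) p -> tangent_at (E k) (E l) q ->
          p <> q].

Definition pos_oriented (E : config) : Prop :=
  forall i j, i != j -> forall x, ~ (ointerior (E i) x /\ ointerior (E j) x).

Definition oriented (E : config) : Prop :=
  pos_oriented E \/ pos_oriented (fun i => reverse (E i)).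

Definition oriented_descartes (E : config) : Prop :=
  descartes E /\ oriented E.

Definition same_uu (E E' : config) : Prop :=
  (forall i, exists j, same_circle (E i) (E' j)) /\
  (forall j, exists i, same_circle (E i) (E' j)).

Definition replacement (E : config) (i : 'I_4) (E' : config) : Prop :=
  [/\ oriented_descartes E, oriented_descartes E',
      forall j, j != i -> E' j = E j,
      ~ same_circle (E' i) (E i) &
      forall j, j != i -> forall p q,
        tangent_at (E i) (E j) p -> tangent_at (E' i) (E j) q -> p <> q].

Inductive in_F (D : config) : config -> Prop :=
  | inF_refl : in_F D D
  | inF_step E i E' : in_F D E -> replacement E i E' -> in_F D E'.

Definition in_DP (D E : config) : Prop :=
  oriented_descartes E /\ exists D', in_F D D' /\ same_uu E D'.

(* augmented curvature-center coordinates *)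
Definition wvec (C : ocircle) : 'I_4 -> R :=
  fun l =>
  match C with
  | OCirc c r =>
      [:: (c.1 ^+ 2 + c.2 ^+ 2 - r ^+ 2) / r; r^-1; c.1 / r; c.2 / r]`_l
  | OLine h m => [:: 2 * m; 0; h.1; h.2]`_l
  end.

Definition Wmat (E : config) : 'M[R]_4 := \matrix_(k, l) wvec (E k) l.

Definition Sgen (i : 'I_4) : 'M[R]_4 :=
  \matrix_(k, l) if k == i then (if l == i then -1 else 2)
                 else (if k == l then 1 else 0).

Inductive in_apollonian : 'M[R]_4 -> Prop :=
  | apo1 : in_apollonian 1%:M
  | apoS i U : in_apollonian U -> in_apollonian (Sgen i *m U)
  | apoSinv i U : in_apollonian U -> in_apollonian (invmx (Sgen i) *m U).

Definition apo_orbit (E E' : config) : Prop :=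
  oriented_descartes E' /\
  exists U, in_apollonian U /\ Wmat E' = U *m Wmat E.

End Descartes.

From HB Require Import structures.
From mathcomp Require Import all_boot all_order all_algebra all_fingroup.
From mathcomp Require Import reals ring lra zify.
Import Order.TTheory GRing.Theory Num.Theory.
Local Open Scope ring_scope.
Set Implicit Arguments. Unset Strict Implicit. Unset Printing Implicit Defensive.

(* Send an oriented circle to its row [w] of augmented curvature-center
   coordinates and a point p of the extended plane to the null vector
   [pvec p]; for the Lorentz form [lform], [w] is a unit vector, p lies on
   the circle iff [lform w (pvec p) = 0] and in its interior iff the pairing
   is positive.  Two oriented circles are tangent with disjoint interiors
   exactly when [lform w w' = -2] and [w + w'] is a future null vector (a
   positive multiple of the tangency point).  Hence oriented Descartes
   configurations are the matrices W whose rows have Gram matrix [4 Q_D],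
   replacing circle i is [W |-> S_i W], and F(D) is the A-orbit of D.  Two
   ordered, oriented configurations have the same underlying configuration
   iff they differ by one of the 48 signed permutation matrices P, which
   normalise A ([S_i P = P S_(s i)]); so DD(P) is the union of the orbits of
   the [P W_D], and these are distinct by a congruence modulo 4. *)

Definition o0 : 'I_4 := @Ordinal 4 0 isT.
Definition o1 : 'I_4 := @Ordinal 4 1 isT.
Definition o2 : 'I_4 := @Ordinal 4 2 isT.
Definition o3 : 'I_4 := @Ordinal 4 3 isT.

Lemma ord4_ind (P : 'I_4 -> Prop) : P o0 -> P o1 -> P o2 -> P o3 -> forall i, P i.
Proof.
move=> P0 P1 P2 P3 [[|[|[|[|n]]]] lt_n4] //.
- by rewrite (_ : Ordinal _ = o0) //; apply: val_inj.
- by rewrite (_ : Ordinal _ = o1) //; apply: val_inj.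
- by rewrite (_ : Ordinal _ = o2) //; apply: val_inj.
- by rewrite (_ : Ordinal _ = o3) //; apply: val_inj.
Qed.

Lemma big_ord4 (V : nmodType) (F : 'I_4 -> V) :
  \sum_(i < 4) F i = F o0 + F o1 + F o2 + F o3.
Proof.
rewrite !big_ord_recr big_ord0 /= add0r.
by congr (_ + _ + _ + _); congr F; apply: val_inj.
Qed.

Lemma exists_ord4_neq2 (i j : 'I_4) : exists k, (k != i) && (k != j).
Proof.
move: i j; apply: ord4_ind; apply: ord4_ind;
  first [by exists o0 | by exists o1 | by exists o2 | by exists o3].
Qed.

Lemma exists_in_pair_notin (i j k l : 'I_4) :
  (i < j)%N -> (k < l)%N -> (i, j) != (k, l) ->
  exists c, [/\ (c == i) || (c == j), c != k & c != l].
Proof.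
move=> lt_ij lt_kl neq.
have [/andP[ik il]|] := boolP ((i != k) && (i != l)); first by exists i; rewrite eqxx.
have [/andP[jk jl]|] := boolP ((j != k) && (j != l)); first by exists j; rewrite eqxx orbT.
rewrite !negb_and !negbK => /orP[/eqP jk|/eqP jl] /orP[/eqP ik|/eqP il]; exfalso.
- by move: lt_ij; rewrite ik jk ltnn.
- by move: lt_ij lt_kl; rewrite il jk => /ltn_trans/[apply]; rewrite ltnn.
- by move: neq; rewrite ik jl eqxx.
- by move: lt_ij; rewrite il jl ltnn.
Qed.

Section PlanarOverlap.
Variable R : realFieldType.

(* Near a common boundary point, with unit inward normals a and b and
   curvatures r and s, two discs look like the regions
   0 < 2 a.v - r |v|^2 and 0 < 2 b.v - s |v|^2. *)
Lemma discs_overlap_acute (a1 a2 b1 b2 r s : R) :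
  a1 ^+ 2 + a2 ^+ 2 = 1 -> b1 ^+ 2 + b2 ^+ 2 = 1 -> 0 < 1 + (a1 * b1 + a2 * b2) ->
  exists v1 v2, 0 < 2 * (a1 * v1 + a2 * v2) - r * (v1 ^+ 2 + v2 ^+ 2) /\
                0 < 2 * (b1 * v1 + b2 * v2) - s * (v1 ^+ 2 + v2 ^+ 2).
Proof.
move=> a_unit b_unit acute.
have norms_ge0 := normr_ge0 r; have norms'_ge0 := normr_ge0 s.
pose t := (1 + `|r| + `|s|)^-1.
have t_gt0 : 0 < t by rewrite invr_gt0; lra.
have value q (c1 c2 d1 d2 : R) : c1 ^+ 2 + c2 ^+ 2 = 1 -> d1 ^+ 2 + d2 ^+ 2 = 1 ->
    2 * (c1 * (t * (c1 + d1)) + c2 * (t * (c2 + d2))) -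
    q * ((t * (c1 + d1)) ^+ 2 + (t * (c2 + d2)) ^+ 2)
    = 2 * t * (1 + (c1 * d1 + c2 * d2)) * (1 - q * t).
  move=> c_unit d_unit.
  transitivity (2 * t * (c1 ^+ 2 + c2 ^+ 2 + (c1 * d1 + c2 * d2)) -
    q * t ^+ 2 * (c1 ^+ 2 + c2 ^+ 2 + (d1 ^+ 2 + d2 ^+ 2) + 2 * (c1 * d1 + c2 * d2))).
    by ring.
  by rewrite c_unit d_unit; ring.
have small q : q <= `|r| + `|s| -> 0 < 1 - q * t.
  by move=> q_le; rewrite subr_gt0 /t ltr_pdivrMr ?mul1r; lra.
exists (t * (a1 + b1)), (t * (a2 + b2)); split.
- rewrite value //; apply: mulr_gt0; first by rewrite !mulr_gt0.
  by apply: small; have := ler_norm r; lra.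
- rewrite (addrC a1) (addrC a2) value // (mulrC b1) (mulrC b2).
  apply: mulr_gt0; first by rewrite !mulr_gt0.
  by apply: small; have := ler_norm s; lra.
Qed.

Lemma discs_overlap_opposite (a1 a2 r s : R) : a1 ^+ 2 + a2 ^+ 2 = 1 -> r + s < 0 ->
  exists v1 v2, 0 < 2 * (a1 * v1 + a2 * v2) - r * (v1 ^+ 2 + v2 ^+ 2) /\
                0 < - 2 * (a1 * v1 + a2 * v2) - s * (v1 ^+ 2 + v2 ^+ 2).
Proof.
move=> a_unit rs_lt0; have [eq_rs|r_neq_s] := eqVneq r s.
  subst s; exists (- a2), a1.
  have -> : a1 * - a2 + a2 * a1 = 0 by ring.
  have -> : (- a2) ^+ 2 + a1 ^+ 2 = 1 by rewrite sqrrN addrC.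
  by split; lra.
pose k := 4 / (r - s).
have rs_neq0 : r - s != 0 by rewrite subr_eq0.
have pos : 0 < - 8 * (r + s) / (r - s) ^+ 2.
  by rewrite mulNr -mulrN divr_gt0 ?exprn_even_gt0 //; lra.
exists (k * a1), (k * a2).
have -> : a1 * (k * a1) + a2 * (k * a2) = k by rewrite -[RHS]mulr1 -a_unit; ring.
have -> : (k * a1) ^+ 2 + (k * a2) ^+ 2 = k ^+ 2 by rewrite -[RHS]mulr1 -a_unit; ring.
split.
- by rewrite (_ : _ - _ = - 8 * (r + s) / (r - s) ^+ 2) // /k; field.
- by rewrite (_ : _ - _ = - 8 * (r + s) / (r - s) ^+ 2) // /k; field.
Qed.

Lemma halfplanes_overlap_acute (h1 h2 g1 g2 c d : R) :
  h1 ^+ 2 + h2 ^+ 2 = 1 -> g1 ^+ 2 + g2 ^+ 2 = 1 -> 0 < 1 + (h1 * g1 + h2 * g2) ->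
  exists x1 x2, 0 < c + 2 * (h1 * x1 + h2 * x2) /\ 0 < d + 2 * (g1 * x1 + g2 * x2).
Proof.
move=> h_unit g_unit acute; set G := h1 * g1 + h2 * g2 in acute.
pose T := (`|c| + `|d| + 1) / (2 * (1 + G)).
have TG : T * (2 * (1 + G)) = `|c| + `|d| + 1.
  by rewrite /T mulfVK // mulf_neq0 // lt0r_neq0.
have := ler_norm (- c); have := ler_norm (- d); rewrite !normrN => le_d le_c.
have := normr_ge0 c; have := normr_ge0 d => d_ge0 c_ge0.
exists (T * (h1 + g1)), (T * (h2 + g2)); split.
- have -> : h1 * (T * (h1 + g1)) + h2 * (T * (h2 + g2)) = T * (1 + G).
    by rewrite -h_unit /G; ring.
  by rewrite (_ : 2 * _ = `|c| + `|d| + 1); [lra | rewrite -TG; ring].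
- have -> : g1 * (T * (h1 + g1)) + g2 * (T * (h2 + g2)) = T * (1 + G).
    by rewrite -g_unit /G; ring.
  by rewrite (_ : 2 * _ = `|c| + `|d| + 1); [lra | rewrite -TG; ring].
Qed.

Lemma halfplanes_overlap_opposite (h1 h2 c d : R) :
  h1 ^+ 2 + h2 ^+ 2 = 1 -> 0 < c + d ->
  exists x1 x2, 0 < c + 2 * (h1 * x1 + h2 * x2) /\ 0 < d - 2 * (h1 * x1 + h2 * x2).
Proof.
move=> h_unit cd_gt0; pose t := (d - c) / 4.
exists (t * h1), (t * h2).
have -> : h1 * (t * h1) + h2 * (t * h2) = t by rewrite -[RHS]mulr1 -h_unit; ring.
by rewrite /t; split; lra.
Qed.

Lemma opposite_of_not_acute (a1 a2 b1 b2 : R) :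
  a1 ^+ 2 + a2 ^+ 2 = 1 -> b1 ^+ 2 + b2 ^+ 2 = 1 -> 1 + (a1 * b1 + a2 * b2) <= 0 ->
  b1 = - a1 /\ b2 = - a2.
Proof.
move=> a_unit b_unit not_acute.
have sum_sq : (a1 + b1) ^+ 2 + (a2 + b2) ^+ 2 = 2 * (1 + (a1 * b1 + a2 * b2)).
  transitivity (a1 ^+ 2 + a2 ^+ 2 + (b1 ^+ 2 + b2 ^+ 2) + 2 * (a1 * b1 + a2 * b2)).
    by ring.
  by rewrite a_unit b_unit; ring.
have := sqr_ge0 (a1 + b1); have := sqr_ge0 (a2 + b2) => sq2 sq1.
have /eqP : (a1 + b1) ^+ 2 = 0 by lra.
have /eqP : (a2 + b2) ^+ 2 = 0 by lra.
by rewrite !sqrf_eq0 !addr_eq0 => /eqP -> /eqP ->; rewrite !opprK.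
Qed.

End PlanarOverlap.

Section LorentzForm.
Variable R : realFieldType.
Local Notation vec := ('I_4 -> R).
Implicit Types (u v w y : vec) (p q : option (R * R)).

(* [lform x y = 4 x Q_W^-1 y^T], so the Descartes relation [W^T Q_D W = Q_W]
   says that the rows of W have Gram matrix [4 Q_D^-1 = 4 Q_D]: 2 on the
   diagonal and -2 off it. *)
Definition lform (x y : vec) : R :=
  - (x o0 * y o1 + x o1 * y o0) + 2 * (x o2 * y o2 + x o3 * y o3).

Definition pvec p : vec := fun l =>
  match p with
  | Some x => [:: x.1 ^+ 2 + x.2 ^+ 2; 1; x.1; x.2]`_l
  | None => [:: 1; 0; 0; 0]`_l
  end.

Definition incident w p := lform w (pvec p) = 0.
Definition side w (x : R * R) := lform w (pvec (Some x)).
Definition future u := 0 < u o0 + u o1.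
Definition vadd u v : vec := fun l => u l + v l.

Lemma lformC u v : lform u v = lform v u.
Proof. rewrite /lform; ring. Qed.

Lemma lformDl u v y : lform (vadd u v) y = lform u y + lform v y.
Proof. rewrite /lform /vadd; ring. Qed.

Lemma lformDr u v y : lform y (vadd u v) = lform y u + lform y v.
Proof. rewrite /lform /vadd; ring. Qed.

Lemma lform_scalel u v y k : (forall l, u l = k * v l) -> lform u y = k * lform v y.
Proof. by move=> uE; rewrite /lform !uE; ring. Qed.

Lemma lform_scaler u v y k : (forall l, u l = k * v l) -> lform y u = k * lform y v.
Proof. by move=> uE; rewrite /lform !uE; ring. Qed.

Lemma eq_lforml u v y : (forall l, u l = v l) -> lform u y = lform v y.
Proof. by move=> uE; rewrite /lform !uE. Qed.

Lemma eq_lformr u v y : (forall l, u l = v l) -> lform y u = lform y v.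
Proof. by move=> uE; rewrite /lform !uE. Qed.

Lemma lform_suml (c : 'I_4 -> R) (f : 'I_4 -> vec) y :
  lform (fun l => \sum_k c k * f k l) y = \sum_k c k * lform (f k) y.
Proof. rewrite /lform !big_ord4; ring. Qed.

Lemma lform_vadd_self u v :
  lform u u = 2 -> lform v v = 2 -> lform u v = -2 -> lform (vadd u v) (vadd u v) = 0.
Proof. by move=> uu vv uv; rewrite lformDl !lformDr uu vv uv (lformC v) uv; ring. Qed.

Lemma sideE w (x : R * R) :
  side w x = - (w o0 + w o1 * (x.1 ^+ 2 + x.2 ^+ 2)) + 2 * (w o2 * x.1 + w o3 * x.2).
Proof. rewrite /side /lform /pvec /=; ring. Qed.

Lemma side_shift w (x : R * R) (v1 v2 : R) :
  side w (x.1 + v1, x.2 + v2) = side w x +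
    2 * ((w o2 - w o1 * x.1) * v1 + (w o3 - w o1 * x.2) * v2) - w o1 * (v1 ^+ 2 + v2 ^+ 2).
Proof. rewrite !sideE /=; ring. Qed.

Lemma incident_infty w : incident w None <-> w o1 = 0.
Proof. rewrite /incident /lform /pvec /=; split; lra. Qed.

Lemma lform_pvec_le0 p q : lform (pvec p) (pvec q) <= 0.
Proof.
case: p q => [[p1 p2]|] [[q1 q2]|]; rewrite /lform /pvec /=; try lra.
rewrite (_ : _ + _ = - ((p1 - q1) ^+ 2 + (p2 - q2) ^+ 2)); last by ring.
by rewrite oppr_le0 addr_ge0 // sqr_ge0.
Qed.

Lemma lform_pvec_eq0 p q : lform (pvec p) (pvec q) = 0 -> p = q.
Proof.
case: p q => [[p1 p2]|] [[q1 q2]|]; rewrite /lform /pvec /= => pq0 //;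
  try by exfalso; lra.
have sq : (p1 - q1) ^+ 2 + (p2 - q2) ^+ 2 = 0 by rewrite -[RHS]oppr0 -pq0; ring.
have := sqr_ge0 (p1 - q1); have := sqr_ge0 (p2 - q2) => sq2 sq1.
have /eqP : (p1 - q1) ^+ 2 = 0 by lra.
have /eqP : (p2 - q2) ^+ 2 = 0 by lra.
by rewrite !sqrf_eq0 !subr_eq0 => /eqP -> /eqP ->.
Qed.

Lemma pvec_future p : future (pvec p).
Proof.
rewrite /future; case: p => [x|]; rewrite /pvec /=; last lra.
by have := sqr_ge0 x.1; have := sqr_ge0 x.2; lra.
Qed.

Lemma null_future_pvec u : lform u u = 0 -> future u ->
  exists p k, 0 < k /\ forall l, u l = k * pvec p l.
Proof.
rewrite /lform /future => null fut.
have uu : u o0 * u o1 = u o2 ^+ 2 + u o3 ^+ 2 by lra.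
have [u1_gt0|u1_le0] := ltP 0 (u o1).
  exists (Some (u o2 / u o1, u o3 / u o1)), (u o1); split => //.
  have u1_neq0 : u o1 != 0 by rewrite lt0r_neq0.
  apply: ord4_ind; rewrite /pvec /= ?mulr1 ?[_ * (_ / _)]mulrC ?mulfVK //.
  by apply: (mulIf u1_neq0); rewrite uu; field.
have u1_eq0 : u o1 = 0.
  apply/eqP; rewrite eq_le u1_le0 /= leNgt; apply/negP => u1_lt0.
  have : 0 <= u o0 * u o1 by rewrite uu addr_ge0 // sqr_ge0.
  by rewrite nmulr_lge0 //; lra.
have := sqr_ge0 (u o2); have := sqr_ge0 (u o3) => sq3 sq2.
rewrite u1_eq0 mulr0 in uu.
have /eqP : u o2 ^+ 2 = 0 by lra.
have /eqP : u o3 ^+ 2 = 0 by lra.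
rewrite !sqrf_eq0 => /eqP u3 /eqP u2.
exists None, (u o0); split; first lra.
by apply: ord4_ind; rewrite /pvec /= ?mulr1 ?mulr0.
Qed.

Lemma null_pvec u : lform u u = 0 ->
  (forall l, u l = 0) \/ exists p k, k != 0 /\ forall l, u l = k * pvec p l.
Proof.
move=> null.
have [fut|past] := ltP 0 (u o0 + u o1).
  right; have [p [k [k_gt0 uE]]] := null_future_pvec null fut.
  by exists p, k; rewrite lt0r_neq0.
have [past'|u01] := ltP (u o0 + u o1) 0.
  right; pose v l := - u l.
  have vv : lform v v = 0 by rewrite -[RHS]null /v /lform; ring.
  have [p [k [k_gt0 vE]]] := null_future_pvec vv ltac:(rewrite /future /v; lra).
  exists p, (- k); split; first by rewrite oppr_eq0 lt0r_neq0.
  by move=> l; rewrite mulNr -vE opprK.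
left; move: null; rewrite /lform => null.
have u1E : u o1 = - u o0 by lra.
have := sqr_ge0 (u o0); have := sqr_ge0 (u o2); have := sqr_ge0 (u o3).
rewrite !expr2 u1E in null * => sq3 sq2 sq0.
have /eqP : u o0 * u o0 = 0 by lra.
have /eqP : u o2 * u o2 = 0 by lra.
have /eqP : u o3 * u o3 = 0 by lra.
rewrite !mulf_eq0 !orbb => /eqP u3 /eqP u2 /eqP u0.
by apply: ord4_ind; rewrite ?u1E ?u0 ?oppr0.
Qed.

Lemma future_null_cone v u : lform v v = 0 -> lform u u = 0 -> future u ->
  lform v u < 0 -> future v.
Proof.
move=> vv uu fut vu_lt0.
have [p [k [k_gt0 uE]]] := null_future_pvec uu fut.
case: (null_pvec vv) => [v0|[q [m [m_neq0 vE]]]].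
  by move: vu_lt0; rewrite /lform !v0; lra.
move: vu_lt0; rewrite (lform_scalel _ vE) (lform_scaler _ uE) => mk_lt0.
have m_gt0 : 0 < m.
  rewrite ltNge; apply/negP => m_le0.
  have : 0 <= m * (k * lform (pvec q) (pvec p)).
    by rewrite mulr_le0 // pmulr_rle0 // lform_pvec_le0.
  by rewrite leNgt mk_lt0.
by rewrite /future !vE -mulrDr; apply: mulr_gt0 => //; exact: pvec_future.
Qed.

End LorentzForm.

Section Tangency.
Variable R : realFieldType.
Local Notation vec := ('I_4 -> R).
Implicit Types (u v w : vec) (p q : option (R * R)).

Lemma incident_someE w (x : R * R) : incident w (Some x) <-> side w x = 0.
Proof. by []. Qed.

Lemma unit_two_points w : lform w w = 2 ->
  exists p q, [/\ p <> q, incident w p & incident w q].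
Proof.
rewrite /lform => ww.
have [w1_eq0|w1_neq0] := eqVneq (w o1) 0.
  have h_unit : w o2 * w o2 + w o3 * w o3 = 1 by rewrite w1_eq0 in ww; lra.
  exists None, (Some (w o0 / 2 * w o2, w o0 / 2 * w o3)).
  split=> //; first exact/incident_infty.
  rewrite incident_someE sideE /= w1_eq0.
  transitivity (w o0 * (w o2 * w o2 + w o3 * w o3 - 1)); first by field.
  by rewrite h_unit subrr mulr0.
have w0E : w o0 = (w o2 ^+ 2 + w o3 ^+ 2 - 1) / w o1.
  by apply: (mulIf w1_neq0); rewrite mulfVK //; lra.
pose c1 := w o2 / w o1; pose c2 := w o3 / w o1.
exists (Some (c1 + (w o1)^-1, c2)), (Some (c1 - (w o1)^-1, c2)); split.
- case=> /eqP; rewrite -subr_eq0 (_ : _ - _ = 2 / w o1); last by ring.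
  by rewrite mulf_eq0 invr_eq0 pnatr_eq0 (negbTE w1_neq0).
- by rewrite incident_someE sideE /= /c1 /c2 w0E; field.
- by rewrite incident_someE sideE /= /c1 /c2 w0E; field.
Qed.

Lemma opposite_not_tangent w w' p : lform w w = 2 -> (forall l, w' l = - w l) ->
  ~ (forall q, incident w q -> incident w' q -> q = p).
Proof.
move=> ww w'E tangent.
have w'_incident q : incident w q -> incident w' q.
  have w'E' l : w' l = -1 * w l by rewrite w'E mulN1r.
  by rewrite /incident (lform_scalel _ w'E') => ->; rewrite mulr0.
have [q1 [q2 [q12 inc1 inc2]]] := unit_two_points ww.
by apply: q12; rewrite (tangent _ inc1 (w'_incident _ inc1)) (tangent _ inc2 (w'_incident _ inc2)).
Qed.

Lemma lform_at_point w w' (x : R * R) :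
  lform w w' = 2 * ((w o2 - w o1 * x.1) * (w' o2 - w' o1 * x.1) +
                    (w o3 - w o1 * x.2) * (w' o3 - w' o1 * x.2)) +
               w' o1 * side w x + w o1 * side w' x.
Proof. by rewrite !sideE /lform; ring. Qed.

Lemma vadd_opposite_normals w w' (x : R * R) : side w x = 0 -> side w' x = 0 ->
  w' o2 - w' o1 * x.1 = - (w o2 - w o1 * x.1) ->
  w' o3 - w' o1 * x.2 = - (w o3 - w o1 * x.2) ->
  forall l, vadd w w' l = (w o1 + w' o1) * pvec (Some x) l.
Proof.
rewrite !sideE => sw sw' n1 n2; apply: ord4_ind; rewrite /vadd /pvec /=; try lra.
have -> : w' o0 = - (w o0 + w o1 * (x.1 ^+ 2 + x.2 ^+ 2)) + 2 * (w o2 * x.1 + w o3 * x.2)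
  - w' o1 * (x.1 ^+ 2 + x.2 ^+ 2) + 2 * (w' o2 * x.1 + w' o3 * x.2) by lra.
have -> : w' o2 = - w o2 + (w o1 + w' o1) * x.1 by lra.
have -> : w' o3 = - w o3 + (w o1 + w' o1) * x.2 by lra.
by ring.
Qed.

Lemma tangent_finite w w' (x0 : R * R) :
  lform w w = 2 -> lform w' w' = 2 -> side w x0 = 0 -> side w' x0 = 0 ->
  (forall q, incident w q -> incident w' q -> q = Some x0) ->
  (forall x, ~ (0 < side w x /\ 0 < side w' x)) ->
  lform w w' = -2 /\ future (vadd w w').
Proof.
move=> ww w'w' s0 s0' tangent disjoint.
have := lform_at_point w w x0; have := lform_at_point w' w' x0.
have := lform_at_point w w' x0; rewrite ww w'w' s0 s0' !mulr0 !addr0.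
set a1 := w o2 - _; set a2 := w o3 - _; set b1 := w' o2 - _; set b2 := w' o3 - _.
move=> ww'E bb aa.
have a_unit : a1 ^+ 2 + a2 ^+ 2 = 1 by rewrite !expr2; lra.
have b_unit : b1 ^+ 2 + b2 ^+ 2 = 1 by rewrite !expr2; lra.
have local_disjoint (v1 v2 : R) :
    ~ (0 < 2 * (a1 * v1 + a2 * v2) - w o1 * (v1 ^+ 2 + v2 ^+ 2) /\
       0 < 2 * (b1 * v1 + b2 * v2) - w' o1 * (v1 ^+ 2 + v2 ^+ 2)).
  move=> pos; apply: (disjoint (x0.1 + v1, x0.2 + v2)).
  by rewrite !side_shift s0 s0' !add0r; exact: pos.
have [b1E b2E] : b1 = - a1 /\ b2 = - a2.
  apply: opposite_of_not_acute => //; rewrite leNgt; apply/negP => acute.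
  have [v1 [v2]] := discs_overlap_acute (w o1) (w' o1) a_unit b_unit acute.
  exact: local_disjoint.
split; first by rewrite ww'E b1E b2E -[-2]mulN1r -a_unit; ring.
have sumE := vadd_opposite_normals s0 s0' b1E b2E.
rewrite /future !sumE -mulrDr; apply: mulr_gt0; last exact: pvec_future.
rewrite ltNge; apply/negP; rewrite le_eqVlt => /orP[/eqP lam_eq0|lam_lt0].
  apply: (opposite_not_tangent ww _ tangent) => l.
  by have := sumE l; rewrite lam_eq0 mul0r /vadd; lra.
have [v1 [v2 [pos pos']]] := discs_overlap_opposite a_unit lam_lt0.
apply: (local_disjoint v1 v2); split=> //.
by rewrite b1E b2E (_ : 2 * _ = -2 * (a1 * v1 + a2 * v2)) //; ring.
Qed.

Lemma tangent_infty w w' :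
  lform w w = 2 -> lform w' w' = 2 -> w o1 = 0 -> w' o1 = 0 ->
  (forall q, incident w q -> incident w' q -> q = None) ->
  (forall x, ~ (0 < side w x /\ 0 < side w' x)) ->
  lform w w' = -2 /\ future (vadd w w').
Proof.
move=> ww w'w' w1_eq0 w'1_eq0 tangent disjoint.
have h_unit : w o2 ^+ 2 + w o3 ^+ 2 = 1.
  by move: ww; rewrite /lform w1_eq0 !expr2; lra.
have h'_unit : w' o2 ^+ 2 + w' o3 ^+ 2 = 1.
  by move: w'w'; rewrite /lform w'1_eq0 !expr2; lra.
have sideL v x : v o1 = 0 -> side v x = - v o0 + 2 * (v o2 * x.1 + v o3 * x.2).
  by move=> v1_eq0; rewrite sideE v1_eq0; ring.
have [h'2E h'3E] : w' o2 = - w o2 /\ w' o3 = - w o3.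
  apply: opposite_of_not_acute => //; rewrite leNgt; apply/negP => acute.
  have [x1 [x2]] := halfplanes_overlap_acute (- w o0) (- w' o0) h_unit h'_unit acute.
  by move=> pos; apply: (disjoint (x1, x2)); rewrite !sideL.
split.
  by rewrite /lform w1_eq0 w'1_eq0 h'2E h'3E -[-2]mulN1r -h_unit; ring.
rewrite /future /vadd w1_eq0 w'1_eq0 addr0 ltNge; apply/negP.
rewrite le_eqVlt => /orP[/eqP w00'|w00'_lt0].
  apply: (opposite_not_tangent ww _ tangent); apply: ord4_ind; lra.
have cd_gt0 : 0 < - w o0 + - w' o0 by lra.
have [x1 [x2 [pos pos']]] := halfplanes_overlap_opposite h_unit cd_gt0.
apply: (disjoint (x1, x2)); rewrite !sideL //= h'2E h'3E; split=> //.
by rewrite (_ : 2 * _ = - (2 * (w o2 * x1 + w o3 * x2))) //; ring.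
Qed.

Lemma tangent_disjoint_gram w w' p :
  lform w w = 2 -> lform w' w' = 2 -> incident w p -> incident w' p ->
  (forall q, incident w q -> incident w' q -> q = p) ->
  (forall x, ~ (0 < side w x /\ 0 < side w' x)) ->
  lform w w' = -2 /\ future (vadd w w').
Proof.
case: p => [x0|] ww w'w' inc inc'; first exact: tangent_finite.
by apply: tangent_infty => //; apply/incident_infty.
Qed.

Lemma gram_tangent_disjoint w w' :
  lform w w = 2 -> lform w' w' = 2 -> lform w w' = -2 -> future (vadd w w') ->
  exists p, [/\ incident w p, incident w' p,
    forall q, incident w q -> incident w' q -> q = p &
    forall x, ~ (0 < side w x /\ 0 < side w' x)].
Proof.
move=> ww w'w' ww' fut.
have [p [k [k_gt0 sumE]]] := null_future_pvec (lform_vadd_self ww w'w' ww') fut.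
have k_neq0 : k != 0 by rewrite lt0r_neq0.
have pair_sum y : lform y (vadd w w') = k * lform y (pvec p) by apply: lform_scaler.
have eq0_scale (r : R) : k * r = 0 -> r = 0 by move/eqP; rewrite mulf_eq0 (negbTE k_neq0) => /eqP.
exists p; split.
- by apply: eq0_scale; rewrite -pair_sum lformDr ww ww'; ring.
- by apply: eq0_scale; rewrite -pair_sum lformDr w'w' lformC ww'; ring.
- move=> q inc inc'; apply/esym/lform_pvec_eq0; rewrite lformC; apply: eq0_scale.
  by rewrite -pair_sum lformDr !(lformC (pvec q)) inc inc' addr0.
- move=> x [pos pos'].
  have : 0 < lform (pvec (Some x)) (vadd w w').
    by rewrite lformDr !(lformC (pvec _)) addr_gt0.
  by rewrite pair_sum lformC (pmulr_rgt0 _ k_gt0) ltNge lform_pvec_le0.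
Qed.

Lemma vadd_pvec_of_incident w w' q :
  lform w w = 2 -> lform w' w' = 2 -> lform w w' = -2 -> ~ (forall l, vadd w w' l = 0) ->
  incident w q -> incident w' q -> exists k, k != 0 /\ forall l, vadd w w' l = k * pvec q l.
Proof.
move=> ww w'w' ww' sum_neq0 inc inc'.
case: (null_pvec (lform_vadd_self ww w'w' ww')) => [//|[p [k [k_neq0 sumE]]]].
exists k; split=> //; suff -> : q = p by [].
apply: lform_pvec_eq0; move: (lformDr w w' (pvec q)).
rewrite (lformC (pvec q) w) (lformC (pvec q) w') inc inc' addr0 (lform_scaler _ sumE) => /eqP.
by rewrite mulf_eq0 (negbTE k_neq0) => /eqP.
Qed.

Lemma incident_subset_line w w' : lform w w = 2 -> w o1 = 0 ->
  (forall p, incident w p -> incident w' p) -> exists k, forall l, w' l = k * w l.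
Proof.
move=> ww w1_eq0 sub.
have h_unit : w o2 ^+ 2 + w o3 ^+ 2 = 1 by move: ww; rewrite /lform w1_eq0 !expr2; lra.
have w'1_eq0 : w' o1 = 0 by apply/incident_infty/sub/incident_infty.
pose x0 := (w o0 / 2 * w o2, w o0 / 2 * w o3).
have side_along v (t : R) : v o1 = 0 -> side v (x0.1 + - t * w o3, x0.2 + t * w o2) =
    - v o0 + w o0 * (v o2 * w o2 + v o3 * w o3) + 2 * t * (v o3 * w o2 - v o2 * w o3).
  by move=> v1_eq0; rewrite side_shift sideE v1_eq0 /x0 /=; field.
have on_w' t : side w' (x0.1 + - t * w o3, x0.2 + t * w o2) = 0.
  apply/incident_someE/sub/incident_someE; rewrite side_along //.
  transitivity (w o0 * (w o2 ^+ 2 + w o3 ^+ 2 - 1)); first by ring.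
  by rewrite h_unit subrr mulr0.
have := on_w' 0; have := on_w' 1; rewrite !side_along // => at1 at0.
have cross : w' o3 * w o2 - w' o2 * w o3 = 0 by lra.
exists (w' o2 * w o2 + w' o3 * w o3); apply: ord4_ind.
- by lra.
- by rewrite w'1_eq0 w1_eq0 mulr0.
- transitivity ((w' o2 * w o2 + w' o3 * w o3) * w o2 + (w' o3 * w o2 - w' o2 * w o3) * - w o3 +
    w' o2 * (1 - (w o2 ^+ 2 + w o3 ^+ 2))); first by ring.
  by rewrite cross h_unit subrr mul0r !mulr0 !addr0.
- transitivity ((w' o2 * w o2 + w' o3 * w o3) * w o3 + (w' o3 * w o2 - w' o2 * w o3) * w o2 +
    w' o3 * (1 - (w o2 ^+ 2 + w o3 ^+ 2))); first by ring.
  by rewrite cross h_unit subrr mul0r !mulr0 !addr0.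
Qed.

Lemma incident_subset_circle w w' : lform w w = 2 -> w o1 != 0 ->
  (forall p, incident w p -> incident w' p) -> exists k, forall l, w' l = k * w l.
Proof.
move=> ww w1_neq0 sub.
have w0E : w o0 = (w o2 ^+ 2 + w o3 ^+ 2 - 1) / w o1.
  by apply: (mulIf w1_neq0); rewrite mulfVK //; move: ww; rewrite /lform !expr2; lra.
pose c := (w o2 / w o1, w o3 / w o1); pose r := (w o1)^-1.
have r_neq0 : r != 0 by rewrite invr_eq0.
pose A := w' o2 - w' o1 * c.1; pose B := w' o3 - w' o1 * c.2.
have on_w' (e1 e2 : R) : e1 ^+ 2 + e2 ^+ 2 = 1 ->
    side w' c + 2 * r * (A * e1 + B * e2) - w' o1 * r ^+ 2 = 0.
  move=> e_unit; have : side w (c.1 + r * e1, c.2 + r * e2) = 0.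
    rewrite sideE /= /r w0E; transitivity ((1 - (e1 ^+ 2 + e2 ^+ 2)) / w o1); first by field.
    by rewrite e_unit subrr mul0r.
  move/incident_someE/sub/incident_someE; rewrite side_shift => <-.
  transitivity (side w' c + 2 * r * (A * e1 + B * e2) - w' o1 * r ^+ 2 * (e1 ^+ 2 + e2 ^+ 2)).
    by rewrite e_unit mulr1.
  by rewrite /A /B; ring.
(* Evaluate [w'] at the four points [c + r e], e = (+-1, 0), (0, +-1), of the circle. *)
have unit10 (e : R) : e ^+ 2 = 1 -> e ^+ 2 + 0 ^+ 2 = 1 /\ 0 ^+ 2 + e ^+ 2 = 1.
  by move=> e_sq; rewrite expr0n addr0 add0r.
have [p1 p1'] := unit10 1 (expr1n _ _).
have [m1 m1'] := unit10 (-1) (etrans (sqrrN 1) (expr1n _ _)).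
have := on_w' _ _ p1; have := on_w' _ _ m1; have := on_w' _ _ p1'; have := on_w' _ _ m1'.
move=> e4 e3 e2 e1.
have rA0 : r * A = 0 by lra.
have rB0 : r * B = 0 by lra.
have A0 : A = 0 by move/eqP: rA0; rewrite mulf_eq0 (negbTE r_neq0) => /eqP.
have B0 : B = 0 by move/eqP: rB0; rewrite mulf_eq0 (negbTE r_neq0) => /eqP.
have center : side w' c = w' o1 * r ^+ 2 by move: e1; rewrite A0 B0; lra.
have w'2E : w' o2 = w' o1 * c.1 by move: A0; rewrite /A; lra.
have w'3E : w' o3 = w' o1 * c.2 by move: B0; rewrite /B; lra.
exists (w' o1 / w o1); apply: ord4_ind.
- move: center; rewrite sideE w'2E w'3E /r /c /= => center.
  have -> : w' o0 = w' o1 * ((w o2 / w o1) ^+ 2 + (w o3 / w o1) ^+ 2 - (w o1)^-1 ^+ 2).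
    by lra.
  by rewrite w0E; field.
- by rewrite divfK.
- by rewrite w'2E /c /=; field.
- by rewrite w'3E /c /=; field.
Qed.

Lemma incident_subset_sign w w' : lform w w = 2 -> lform w' w' = 2 ->
  (forall p, incident w p -> incident w' p) ->
  exists k, (k = 1 \/ k = -1) /\ forall l, w' l = k * w l.
Proof.
move=> ww w'w' sub.
have [k w'E] : exists k, forall l, w' l = k * w l.
  have [w1_eq0|w1_neq0] := eqVneq (w o1) 0.
    exact: incident_subset_line.
  exact: incident_subset_circle.
exists k; split=> //.
have : lform w' w' = k ^+ 2 * lform w w by rewrite (lform_scalel _ w'E) (lform_scaler _ w'E); ring.
rewrite ww w'w' => /eqP; rewrite -subr_eq0 (_ : _ - _ = -2 * ((k - 1) * (k + 1))); last by ring.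
rewrite !mulf_eq0 oppr_eq0 pnatr_eq0 /= subr_eq0 addr_eq0.
by case/orP => /eqP ->; [left|right].
Qed.

End Tangency.

Section Circles.
Variable R : realType.
Implicit Types C : ocircle R.

Lemma wvec_lform_self C : wf_ocircle C -> lform (wvec C) (wvec C) = 2.
Proof. by case: C => [c r|h m] /= wfC; rewrite /lform /wvec /=; [field | nra]. Qed.

Lemma side_circle c r (x : R * R) : r != 0 ->
  side (wvec (OCirc c r)) x = (r ^+ 2 - ((x.1 - c.1) ^+ 2 + (x.2 - c.2) ^+ 2)) / r.
Proof. by move=> r_neq0; rewrite sideE /wvec /=; field. Qed.

Lemma on_circle_incident C p : wf_ocircle C -> on_circle C p <-> incident (wvec C) p.
Proof.
case: C p => [c r|h m] [x|] /= wfC.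
- rewrite incident_someE side_circle //.
  split=> [->|/eqP]; first by rewrite subrr mul0r.
  by rewrite mulf_eq0 invr_eq0 (negbTE wfC) orbF subr_eq0 => /eqP ->.
- split=> //; rewrite /incident /lform /wvec /pvec /= => r_inv0.
  by move: wfC; rewrite -invr_eq0; apply/negP; rewrite negbK; apply/eqP; lra.
- by rewrite incident_someE sideE /wvec /=; split; lra.
- by rewrite /incident /lform /wvec /pvec /=; split; lra.
Qed.

Lemma ointerior_side C x : wf_ocircle C -> ointerior C x <-> 0 < side (wvec C) x.
Proof.
case: C => [c r|h m] /= wfC; last by rewrite sideE /wvec /=; split; lra.
rewrite side_circle //; case: ltP => r_sign.
- by rewrite pmulr_lgt0 ?invr_gt0 // subr_gt0.
- have r_lt0 : r < 0 by rewrite lt_neqAle wfC r_sign.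
  by rewrite nmulr_lgt0 ?invr_lt0 // subr_lt0.
Qed.

Lemma wvec_reverse C l : wvec (reverse C) l = - wvec C l.
Proof.
by move: l; apply: ord4_ind; case: C => [c r|h m];
  rewrite /wvec /= ?invrN ?sqrrN ?mulrN ?oppr0.
Qed.

Lemma wf_reverse C : wf_ocircle (reverse C) <-> wf_ocircle C.
Proof. by case: C => [c r|h m] /=; rewrite ?oppr_eq0 ?sqrrN. Qed.

Lemma on_circle_reverse C p : on_circle (reverse C) p <-> on_circle C p.
Proof.
case: C p => [c r|h m] [x|] //=; first by rewrite sqrrN.
by split; lra.
Qed.

Lemma reverseK : involutive (@reverse R).
Proof. by case=> [c r|[h1 h2] m] /=; rewrite ?opprK. Qed.

Lemma wvec_inj C C' : wf_ocircle C -> wf_ocircle C' -> wvec C =1 wvec C' -> C = C'.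
Proof.
case: C C' => [[c1 c2] r|[h1 h2] m] [[c1' c2'] r'|[h1' h2'] m'] /= wfC wfC' eqw.
- have := eqw o1; have := eqw o2; have := eqw o3; rewrite /wvec /= => e3 e2 /invr_inj rr'.
  have r_inv_neq0 : r^-1 != 0 by rewrite invr_eq0.
  by rewrite -rr' in e2 e3; rewrite rr' (mulIf r_inv_neq0 e2) (mulIf r_inv_neq0 e3).
- by have := eqw o1; rewrite /wvec /= => /eqP; rewrite invr_eq0 (negbTE wfC).
- by have := eqw o1; rewrite /wvec /= => /esym/eqP; rewrite invr_eq0 (negbTE wfC').
- have := eqw o0; have := eqw o2; have := eqw o3; rewrite /wvec /= => -> -> mm'.
  by congr OLine; apply: (mulrI (x := 2)); rewrite ?unitfE ?pnatr_eq0.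
Qed.

Lemma wvec_surj (x : 'I_4 -> R) : lform x x = 2 ->
  exists2 C, wf_ocircle C & wvec C =1 x.
Proof.
rewrite /lform => xx.
have [x1_eq0|x1_neq0] := eqVneq (x o1) 0.
  exists (OLine (x o2, x o3) (x o0 / 2)); first by rewrite /= !expr2; rewrite x1_eq0 in xx; lra.
  by apply: ord4_ind; rewrite /wvec //= mulrC divfK // pnatr_eq0.
exists (OCirc (x o2 / x o1, x o3 / x o1) (x o1)^-1); first by rewrite /= invr_eq0.
have x0E : x o0 = (x o2 ^+ 2 + x o3 ^+ 2 - 1) / x o1.
  by apply: (mulIf x1_neq0); rewrite divfK // !expr2; lra.
by apply: ord4_ind; rewrite /wvec /= ?invrK ?divfK // x0E; field.
Qed.

Lemma same_circle_sign C C' : wf_ocircle C -> wf_ocircle C' -> same_circle C C' ->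
  exists k, (k = 1 \/ k = -1) /\ forall l, wvec C' l = k * wvec C l.
Proof.
move=> wfC wfC' same; apply: incident_subset_sign; rewrite ?wvec_lform_self //.
by move=> p /(on_circle_incident _ wfC)/same/(on_circle_incident _ wfC').
Qed.

Lemma scale_same_circle C C' k : wf_ocircle C -> wf_ocircle C' -> k != 0 ->
  (forall l, wvec C' l = k * wvec C l) -> same_circle C C'.
Proof.
move=> wfC wfC' k_neq0 C'E p.
rewrite (on_circle_incident _ wfC) (on_circle_incident _ wfC') /incident (lform_scalel _ C'E).
split=> [->|/eqP]; first by rewrite mulr0.
by rewrite mulf_eq0 (negbTE k_neq0) => /eqP.
Qed.

Lemma tangent_atE C C' p : wf_ocircle C -> wf_ocircle C' ->
  tangent_at C C' p <-> [/\ incident (wvec C) p, incident (wvec C') p &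
    forall q, incident (wvec C) q -> incident (wvec C') q -> q = p].
Proof.
move=> wfC wfC'; have onC := on_circle_incident _ wfC; have onC' := on_circle_incident _ wfC'.
split=> -[inc inc' uniq]; split.
- exact/onC.
- exact/onC'.
- by move=> q /onC incq /onC' incq'; apply: uniq.
- exact/onC.
- exact/onC'.
- by move=> q /onC incq /onC' incq'; apply: uniq.
Qed.

Lemma disjoint_interiorsE C C' : wf_ocircle C -> wf_ocircle C' ->
  (forall x, ~ (ointerior C x /\ ointerior C' x)) <->
  (forall x, ~ (0 < side (wvec C) x /\ 0 < side (wvec C') x)).
Proof.
by move=> wfC wfC'; split=> disj x; rewrite ?ointerior_side // in disj *; rewrite -?ointerior_side.
Qed.

End Circles.

Section Configurations.
Variable R : realType.
Implicit Types E : config R.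

Definition descartes_gram E := forall a b,
  lform (wvec (E a)) (wvec (E b)) = if a == b then 2 else -2.

Definition positive_gram E := [/\ forall i, wf_ocircle (E i), descartes_gram E &
  forall a b, a != b -> future (vadd (wvec (E a)) (wvec (E b)))].

Definition revconf E : config R := fun i => reverse (E i).

Lemma lform_vadd_row E a b c : descartes_gram E ->
  lform (vadd (wvec (E a)) (wvec (E b))) (wvec (E c)) =
  (if a == c then 2 else -2) + (if b == c then 2 else -2).
Proof. by move=> gram; rewrite lformDl !gram. Qed.

Lemma vadd_row_neq0 E a b : descartes_gram E -> a != b ->
  ~ (forall l, vadd (wvec (E a)) (wvec (E b)) l = 0).
Proof.
move=> gram ab sum0; have [c /andP[ca cb]] := exists_ord4_neq2 a b.
have := lform_vadd_row a b c gram; rewrite eq_sym (negbTE ca) eq_sym (negbTE cb).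
by rewrite /lform !sum0; lra.
Qed.

Lemma pos_descartes_gram E : descartes E -> pos_oriented E -> positive_gram E.
Proof.
case=> wfE tangent _ disjoint.
have pair a b : a != b ->
    lform (wvec (E a)) (wvec (E b)) = -2 /\ future (vadd (wvec (E a)) (wvec (E b))).
  move=> ab; have [p /(tangent_atE _ (wfE a) (wfE b)) [inc inc' uniq]] := tangent a b ab.
  apply: (tangent_disjoint_gram (wvec_lform_self (wfE a)) (wvec_lform_self (wfE b)) inc inc' uniq).
  exact/(disjoint_interiorsE (wfE a) (wfE b))/disjoint.
split=> // [a b|a b ab]; last by case: (pair a b ab).
by case: eqVneq => [->|ab]; [exact: wvec_lform_self | case: (pair a b ab)].
Qed.

(* The tangency point of circles i and j is represented by [w_i + w_j], which
   pairs to 0 with [w_i] and [w_j] but to -4 with the two other rows. *)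
Lemma positive_gram_descartes E : positive_gram E -> descartes E /\ pos_oriented E.
Proof.
case=> wfE gram fut.
have gram_diag a : lform (wvec (E a)) (wvec (E a)) = 2 by rewrite gram eqxx.
have gram_off a b : a != b -> lform (wvec (E a)) (wvec (E b)) = -2.
  by move=> ab; rewrite gram (negbTE ab).
have pair a b : a != b -> exists p, [/\ incident (wvec (E a)) p, incident (wvec (E b)) p,
    forall q, incident (wvec (E a)) q -> incident (wvec (E b)) q -> q = p &
    forall x, ~ (0 < side (wvec (E a)) x /\ 0 < side (wvec (E b)) x)].
  move=> ab; apply: gram_tangent_disjoint;
    [exact: gram_diag | exact: gram_diag | exact: gram_off | exact: fut].
split; last first.
  move=> a b ab; have [p [_ _ _ disj]] := pair a b ab.
  exact/(disjoint_interiorsE (wfE a) (wfE b)).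
split=> // [a b ab|i j k l lt_ij lt_kl neq p q].
  by have [p [inc inc' uniq _]] := pair a b ab; exists p; apply/tangent_atE.
move=> /(tangent_atE _ (wfE i) (wfE j)) [inc_i inc_j _].
move=> /(tangent_atE _ (wfE k) (wfE l)) [inc_k inc_l _] pq; subst q.
have ij : i != j by rewrite neq_ltn lt_ij.
have kl : k != l by rewrite neq_ltn lt_kl.
have [lam [lam_neq0 ijE]] := vadd_pvec_of_incident (gram_diag i) (gram_diag j)
  (gram_off i j ij) (vadd_row_neq0 gram ij) inc_i inc_j.
have [mu [mu_neq0 klE]] := vadd_pvec_of_incident (gram_diag k) (gram_diag l)
  (gram_off k l kl) (vadd_row_neq0 gram kl) inc_k inc_l.
have [c [c_ij ck cl]] := exists_in_pair_notin lt_ij lt_kl neq.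
have : lform (vadd (wvec (E i)) (wvec (E j))) (wvec (E c)) = 0.
  rewrite lform_vadd_row //.
  have ji : j != i by rewrite eq_sym.
  by case/orP: c_ij => /eqP ->; rewrite eqxx ?(negbTE ij) ?(negbTE ji); ring.
rewrite (lform_scalel _ ijE) => /eqP; rewrite mulf_eq0 (negbTE lam_neq0) /= => /eqP pc0.
have := lform_vadd_row k l c gram; rewrite (lform_scalel _ klE) pc0 mulr0.
by rewrite eq_sym (negbTE ck) eq_sym (negbTE cl) => /eqP; rewrite eq_sym; lra.
Qed.

Lemma tangent_at_reverse (C C' : ocircle R) p :
  tangent_at (reverse C) (reverse C') p <-> tangent_at C C' p.
Proof.
have onR := @on_circle_reverse R.
split=> -[inc inc' uniq]; split; try exact/onR.
- by move=> q incq incq'; apply: uniq; apply/onR.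
- by move=> q /onR incq /onR incq'; apply: uniq.
Qed.

Lemma descartes_revconf E : descartes (revconf E) <-> descartes E.
Proof.
have tangentR := @tangent_at_reverse; rewrite /revconf.
split=> -[wfE tangent distinct]; split.
- by move=> i; apply/wf_reverse.
- by move=> i j ij; have [p /tangentR] := tangent i j ij; exists p.
- by move=> i j k l lt_ij lt_kl neq p q /tangentR Tp /tangentR; apply: distinct Tp.
- by move=> i; apply/wf_reverse.
- by move=> i j ij; have [p /tangentR] := tangent i j ij; exists p.
- by move=> i j k l lt_ij lt_kl neq p q /tangentR Tp /tangentR; apply: distinct Tp.
Qed.

Lemma revconfK : involutive (@revconf).
Proof. by move=> E; apply: boolp.funext => i; apply: reverseK. Qed.

Lemma oriented_descartesP E :
  oriented_descartes E <-> positive_gram E \/ positive_gram (revconf E).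
Proof.
split=> [[desc [pos|pos]]|[gram|gram]].
- by left; apply: pos_descartes_gram.
- by right; apply: pos_descartes_gram => //; apply/descartes_revconf.
- by have [desc pos] := positive_gram_descartes gram; split=> //; left.
- have [desc pos] := positive_gram_descartes gram.
  by split; [apply/descartes_revconf | right].
Qed.

Lemma descartes_gram_revconf E : descartes_gram (revconf E) -> descartes_gram E.
Proof.
move=> gram a b; rewrite -gram.
have rowR i l : wvec (revconf E i) l = -1 * wvec (E i) l by rewrite wvec_reverse mulN1r.
by rewrite (lform_scalel _ (rowR a)) (lform_scaler _ (rowR b)) !mulN1r opprK.
Qed.

Lemma oriented_descartes_gram E : oriented_descartes E -> descartes_gram E.
Proof. by case/oriented_descartesP => [[]|[_ /descartes_gram_revconf]]. Qed.

Lemma oriented_descartes_wf E : oriented_descartes E -> forall i, wf_ocircle (E i).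
Proof. by case=> -[]. Qed.

End Configurations.

Section Matrices.
Variable R : realType.
Implicit Types E : config R.

Lemma WmatE E a l : Wmat E a l = wvec (E a) l.
Proof. by rewrite mxE. Qed.

Definition lform_mx : 'M[R]_4 := \matrix_(i, j)
  (nth [::] [:: [:: 0; -1; 0; 0]; [:: -1; 0; 0; 0]; [:: 0; 0; 2; 0]; [:: 0; 0; 0; 2]] i)`_j.

Lemma Wmat_lform E a b :
  (Wmat E *m lform_mx *m (Wmat E)^T) a b = lform (wvec (E a)) (wvec (E b)).
Proof. by rewrite !mxE big_ord4 !mxE !big_ord4 !mxE /= /lform; ring. Qed.

(* The inverse of the Gram matrix [4 I - 2 J] is [I / 4 - J / 8]. *)
Definition gram_inv_mx : 'M[R]_4 := \matrix_(i, j) ((i == j)%:R / 4 - 1 / 8).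

Lemma Wmat_rinv E : descartes_gram E ->
  Wmat E *m (lform_mx *m (Wmat E)^T *m gram_inv_mx) = 1%:M.
Proof.
move=> gram; rewrite !mulmxA; apply/matrixP => a b.
rewrite mxE big_ord4 !Wmat_lform !gram !mxE.
by move: a b; apply: ord4_ind; apply: ord4_ind; rewrite /=; field.
Qed.

Lemma Wmat_unit E : descartes_gram E -> Wmat E \in unitmx.
Proof. by move/Wmat_rinv/mulmx1_unit => []. Qed.

Lemma rows_span E : descartes_gram E -> forall y : 'I_4 -> R,
  exists c : 'I_4 -> R, forall l, y l = \sum_k c k * wvec (E k) l.
Proof.
move=> gram y; pose yr : 'rV[R]_4 := \row_l y l.
exists (fun k => (yr *m invmx (Wmat E)) ord0 k) => l.
have /matrixP/(_ ord0 l) := mulmxKV (Wmat_unit gram) yr.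
rewrite [in RHS]mxE => <-; rewrite mxE.
by apply: eq_bigr => k _; rewrite WmatE.
Qed.

Lemma Sgen_mulE (i : 'I_4) (M : 'M[R]_4) a c :
  (Sgen R i *m M) a c = if a == i then 2 * (\sum_k M k c) - 3 * M i c else M a c.
Proof.
rewrite mxE; case: eqP => [->|/eqP ai].
- rewrite (bigD1 i) //= [in RHS](bigD1 i) //= !mxE !eqxx.
  under eq_bigr => k /negbTE ki do rewrite mxE eqxx ki.
  by rewrite -mulr_sumr; ring.
- rewrite (bigD1 a) //= mxE (negbTE ai) eqxx mul1r big1 ?addr0 // => k ka.
  by rewrite mxE (negbTE ai) eq_sym (negbTE ka) mul0r.
Qed.

Lemma SgenK (i : 'I_4) : Sgen R i *m Sgen R i = 1%:M.
Proof.
apply/matrixP => a c; rewrite !mxE big_ord4 !mxE.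
by move: i a c; apply: ord4_ind; apply: ord4_ind; apply: ord4_ind; rewrite /=; ring.
Qed.

Lemma invmx_Sgen (i : 'I_4) : invmx (Sgen R i) = Sgen R i.
Proof.
have Si_unit : Sgen R i \in unitmx by case: (mulmx1_unit (SgenK i)).
by rewrite -[RHS]mul1mx -(mulVmx Si_unit) -mulmxA SgenK mulmx1.
Qed.

Lemma apollonian_ind (P : 'M[R]_4 -> Prop) :
  P 1%:M -> (forall i U, in_apollonian U -> P U -> P (Sgen R i *m U)) ->
  forall U, in_apollonian U -> P U.
Proof.
move=> P1 PS U; elim=> [//|i {}U AU PU|i {}U AU PU]; last rewrite invmx_Sgen; exact: PS.
Qed.

Definition sign (b : bool) : R := if b then -1 else 1.

Lemma signK b : sign b * sign b = 1.
Proof. by case: b; rewrite /sign ?mulrNN mulr1. Qed.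

Lemma sign_neq0 b : sign b != 0.
Proof. by case: b; rewrite /sign ?oppr_eq0 oner_eq0. Qed.

Definition spmx (s : {perm 'I_4}) (b : bool) : 'M[R]_4 :=
  \matrix_(i, k) (sign b * (s i == k)%:R).

Lemma spmx_mulE s b (M : 'M[R]_4) a c : (spmx s b *m M) a c = sign b * M (s a) c.
Proof.
rewrite mxE (bigD1 (s a)) //= mxE eqxx mulr1 big1 ?addr0 // => k ka.
by rewrite mxE eq_sym (negbTE ka) mulr0 mul0r.
Qed.

Lemma mul_spmxE s b (M : 'M[R]_4) a c : (M *m spmx s b) a c = sign b * M a ((s^-1)%g c).
Proof.
rewrite mxE (bigD1 ((s^-1)%g c)) //= mxE permKV eqxx mulr1 big1 ?addr0; first by rewrite mulrC.
by move=> k ka; rewrite mxE (canF_eq (permK s)) (negbTE ka) !mulr0.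
Qed.

Lemma Sgen_spmx (i : 'I_4) s b : Sgen R i *m spmx s b = spmx s b *m Sgen R (s i).
Proof.
apply/matrixP => a c; rewrite mul_spmxE spmx_mulE !mxE.
by rewrite (inj_eq (@perm_inj _ s)) (canF_eq (permKV s)) (canF_eq (permK s)).
Qed.

Lemma apollonian_mul_spmx s b U : in_apollonian U ->
  exists2 U', in_apollonian U' & U *m spmx s b = spmx s b *m U'.
Proof.
move: U; apply: apollonian_ind => [|i U _ [U' AU' UE]].
  by exists 1%:M; [exact: apo1 | rewrite mul1mx mulmx1].
exists (Sgen R (s i) *m U'); first exact: apoS.
by rewrite -mulmxA UE !mulmxA Sgen_spmx.
Qed.

Lemma spmx_mul_apollonian s b U : in_apollonian U ->
  exists2 U', in_apollonian U' & spmx s b *m U = U' *m spmx s b.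
Proof.
move: U; apply: apollonian_ind => [|i U _ [U' AU' UE]].
  by exists 1%:M; [exact: apo1 | rewrite mul1mx mulmx1].
exists (Sgen R ((s^-1)%g i) *m U'); first exact: apoS.
by rewrite mulmxA -[s in Sgen R s](permKV s) -Sgen_spmx -mulmxA UE mulmxA.
Qed.

(* Modulo 4, every element of the Apollonian group is congruent to the
   identity plus twice a matrix with constant rows; no two distinct signed
   permutation matrices differ by such a factor. *)
Definition apollonian_mod4 (U : 'M[R]_4) := exists (v : 'I_4 -> int) (z : 'I_4 -> 'I_4 -> int),
  forall a c, U a c = ((a == c)%:Z + 2 * v a + 4 * z a c)%:~R.

Lemma apollonian_mod4P U : in_apollonian U -> apollonian_mod4 U.
Proof.
move: U; apply: apollonian_ind.
  by exists (fun _ => 0), (fun _ _ => 0) => a c; rewrite !mulr0 !addr0 mxE.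
move=> i U _ [v [z UE]].
exists (fun a => if a == i then 1 - v a else v a).
exists (fun a c => if a == i then
  (\sum_k v k) + 2 * (\sum_k z k c) - (i == c)%:Z - v i - 3 * z i c else z a c) => a c.
rewrite Sgen_mulE; case: eqP => [->|_]; last exact: UE.
have delta_sum : \sum_(k < 4) (((k == c)%:Z)%:~R : R) = 1.
  by rewrite (bigD1 c) //= eqxx big1 ?addr0 // => k /negbTE ->.
under eq_bigr => k _ do rewrite UE !intrD !intrM.
rewrite UE !intrD !intrM !intrB !intrD !intrM !rmorph_sum.
by rewrite !big_split /= -!mulr_sumr delta_sum; ring.
Qed.

Definition isign (b : bool) : int := if b then -1 else 1.

Lemma spmx_apollonian_inj (U1 U2 : 'M[R]_4) s1 b1 s2 b2 :
  in_apollonian U1 -> in_apollonian U2 ->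
  U1 *m spmx s1 b1 = U2 *m spmx s2 b2 -> s1 = s2 /\ b1 = b2.
Proof.
move=> /apollonian_mod4P [v1 [z1 U1E]] /apollonian_mod4P [v2 [z2 U2E]] eqU.
have signE b : sign b = (isign b)%:~R by case: b.
have entries a c :
    isign b1 * ((a == (s1^-1)%g c)%:Z + 2 * v1 a + 4 * z1 a ((s1^-1)%g c)) =
    isign b2 * ((a == (s2^-1)%g c)%:Z + 2 * v2 a + 4 * z2 a ((s2^-1)%g c)).
  apply: (@intr_inj R); rewrite !intrM -!signE -U1E -U2E -!mul_spmxE.
  by rewrite eqU.
have s12 : s1 = s2.
  apply/permP => a; have := entries a (s1 a); rewrite permK eqxx.
  case: eqP => [a_eq _|_]; first by rewrite {2}a_eq permKV.
  by move=> entry; clear -entry; case: b1 b2 entry => [] [] /=; lia.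
subst s2; split=> //.
have := entries o0 (s1 o0); have := entries o0 (s1 o1); rewrite !permK /=.
by move=> e1 e2; clear -e1 e2; case: b1 b2 e1 e2 => [] [] //=; lia.
Qed.

End Matrices.

Section GramCoordinates.
Variable R : realFieldType.

Lemma sum_gram_row (c : 'I_4 -> R) j :
  \sum_k c k * (if k == j then 2 else -2) = 4 * c j - 2 * \sum_k c k.
Proof. by rewrite !big_ord4; move: j; apply: ord4_ind; rewrite /=; ring. Qed.

(* [c] are the coordinates, in the basis of a Descartes configuration, of a
   unit vector tangent to all circles but the [i]-th: it is that circle or
   the one replacing it. *)
Lemma replacement_coords (c : 'I_4 -> R) i :
  (forall j, j != i -> 4 * c j - 2 * \sum_k c k = -2) ->
  \sum_j c j * (4 * c j - 2 * \sum_k c k) = 2 ->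
  (forall j, c j = if j == i then 1 else 0) \/ (forall j, c j = if j == i then -1 else 2).
Proof.
set S := \sum_k c k => off unit; pose a := (S - 1) / 2.
have cE j : j != i -> c j = a by move=> /off; rewrite /a; lra.
have card3 : #|[pred j : 'I_4 | j != i]| = 3 by rewrite cardC1 card_ord.
have SE : S = c i + 3 * a.
  rewrite /S (bigD1 i) //= (eq_bigr (fun=> a)) => [|j /cE //].
  by rewrite sumr_const card3 mulr_natl.
have ciE : c i = 1 - a by move: SE; rewrite /a; lra.
have : c i * (4 * c i - 2 * S) + 3 * (a * -2) = 2.
  rewrite -[RHS]unit (bigD1 i) //= (eq_bigr (fun=> a * -2)) => [|j ji]; last by rewrite off // cE.
  by rewrite sumr_const card3 [3 * _]mulr_natl.
rewrite ciE SE ciE => quad.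
have : a * (a - 2) = 0 by move: quad; rewrite !mulrDr; nra.
move=> /eqP; rewrite mulf_eq0 subr_eq0 => /orP[]/eqP a_val; [left|right] => j;
  by case: eqVneq => [->|/cE ->]; rewrite ?ciE a_val //; ring.
Qed.

End GramCoordinates.

Section Replacement.
Variable R : realType.
Implicit Types E : config R.

(* [w_i' = 2 (w_j + w_k + w_l) - w_i], the row [S_i W] of the replacing circle. *)
Definition replacev E i : 'I_4 -> R :=
  fun l => 2 * (\sum_k wvec (E k) l) - 3 * wvec (E i) l.

Lemma replacevE E i l :
  replacev E i l = \sum_k (if k == i then -1 else 2) * wvec (E k) l.
Proof. by rewrite /replacev !big_ord4; move: i; apply: ord4_ind; rewrite /=; ring. Qed.

Lemma lform_replacev E i j : descartes_gram E ->
  lform (replacev E i) (wvec (E j)) = if i == j then -14 else -2.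
Proof.
move=> gram; rewrite (eq_lforml _ (replacevE E i)) lform_suml.
under eq_bigr => k _ do rewrite gram.
by rewrite big_ord4; move: i j; apply: ord4_ind; apply: ord4_ind; rewrite /=; ring.
Qed.

Lemma lform_replacev_self E i : descartes_gram E -> lform (replacev E i) (replacev E i) = 2.
Proof.
move=> gram; rewrite (eq_lforml _ (replacevE E i)) lform_suml.
under eq_bigr => k _ do rewrite lformC lform_replacev //.
by rewrite big_ord4; move: i; apply: ord4_ind; rewrite /=; ring.
Qed.

Lemma future_replacev E i b : positive_gram E -> b != i ->
  future (vadd (replacev E i) (wvec (E b))).
Proof.
case=> _ gram fut bi; have [k /andP[ki kb]] := exists_ord4_neq2 i b.
have gram_diag a : lform (wvec (E a)) (wvec (E a)) = 2 by rewrite gram eqxx.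
have bk : b != k by rewrite eq_sym.
have rep_b : lform (replacev E i) (wvec (E b)) = -2 by rewrite lform_replacev // eq_sym (negbTE bi).
have rep_k : lform (replacev E i) (wvec (E k)) = -2 by rewrite lform_replacev // eq_sym (negbTE ki).
apply: (@future_null_cone _ _ (vadd (wvec (E b)) (wvec (E k)))).
- exact: lform_vadd_self (lform_replacev_self i gram) (gram_diag b) rep_b.
- by apply: lform_vadd_self; rewrite ?gram_diag // gram (negbTE bk).
- exact: fut.
- rewrite lformDl !lformDr rep_b rep_k gram_diag gram (negbTE bk); lra.
Qed.

Lemma replace_positive E i : positive_gram E -> exists E' : config R,
  [/\ positive_gram E', forall j, j != i -> E' j = E j &
      forall l, wvec (E' i) l = replacev E i l].
Proof.
move=> posE; case: (posE) => wfE gram fut.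
have [C wfC CE] := wvec_surj (lform_replacev_self i gram).
pose E' j := if j == i then C else E j.
have rowE' j : j != i -> wvec (E' j) = wvec (E j) by rewrite /E' => /negbTE ->.
have rowE'i : wvec (E' i) =1 replacev E i by rewrite /E' eqxx.
exists E'; split=> [| j /negbTE ji | //]; last by rewrite /E' ji.
split=> [j|a b|a b ab]; first by rewrite /E'; case: eqP.
- case: (eqVneq a i) => [->|ai]; case: (eqVneq b i) => [->|bi].
  + by rewrite (eq_lforml _ rowE'i) (eq_lformr _ rowE'i) lform_replacev_self // eqxx.
  + by rewrite (eq_lforml _ rowE'i) rowE' // lform_replacev // eq_sym (negbTE bi).
  + by rewrite lformC (eq_lforml _ rowE'i) rowE' // lform_replacev // eq_sym (negbTE ai).
  + by rewrite !rowE' // gram.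
- rewrite /future /vadd; case: (eqVneq a i) => [ai|ai]; case: (eqVneq b i) => [bi|bi].
  + by move: ab; rewrite ai bi eqxx.
  + by rewrite ai (rowE' b bi) !rowE'i; have := future_replacev posE bi.
  + by rewrite bi (rowE' a ai) !rowE'i; have := future_replacev posE ai; rewrite /future /vadd; lra.
  + by rewrite !rowE' //; apply: fut.
Qed.

Lemma Wmat_replace E E' i : (forall j, j != i -> E' j = E j) ->
  wvec (E' i) =1 replacev E i -> Wmat E' = Sgen R i *m Wmat E.
Proof.
move=> E'E E'iE; apply/matrixP => a c; rewrite Sgen_mulE WmatE.
case: eqP => [->|/eqP ai]; last by rewrite WmatE E'E.
rewrite E'iE /replacev WmatE; congr (_ * _ - _).
by apply: eq_bigr => k _; rewrite WmatE.
Qed.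

Lemma replacement_replacev E E' i : oriented_descartes E -> oriented_descartes E' ->
  (forall j, j != i -> E' j = E j) -> wvec (E' i) =1 replacev E i -> replacement E i E'.
Proof.
move=> odE odE' E'E E'iE.
have gram := oriented_descartes_gram odE; have gram' := oriented_descartes_gram odE'.
have wfE := oriented_descartes_wf odE; have wfE' := oriented_descartes_wf odE'.
have gram_diag a : lform (wvec (E a)) (wvec (E a)) = 2 by rewrite gram eqxx.
have new_row j : lform (wvec (E' i)) (wvec (E j)) = if i == j then -14 else -2.
  by rewrite (eq_lforml _ E'iE) lform_replacev.
split=> // [same|j ji p q Tp Tq pq].
  have [k [k_pm1 kE]] := same_circle_sign (wfE' i) (wfE i) same.
  have := lform_scalel (wvec (E i)) kE; rewrite gram_diag new_row eqxx.
  by case: k_pm1 => ->; lra.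
subst q; have ij : i != j by rewrite eq_sym.
move/(tangent_atE _ (wfE i) (wfE j)): Tp => [inc_i inc_j _].
move/(tangent_atE _ (wfE' i) (wfE j)): Tq => [inc_i' inc_j' _].
have old_off : lform (wvec (E i)) (wvec (E j)) = -2 by rewrite gram (negbTE ij).
have new_off : lform (wvec (E' i)) (wvec (E j)) = -2 by rewrite new_row (negbTE ij).
have new_diag : lform (wvec (E' i)) (wvec (E' i)) = 2 by rewrite gram' eqxx.
have new_neq0 := vadd_row_neq0 gram' ij; rewrite (E'E j ji) in new_neq0.
have [lam [lam_neq0 oldE]] := vadd_pvec_of_incident (gram_diag i) (gram_diag j) old_off
  (vadd_row_neq0 gram ij) inc_i inc_j.
have [mu [mu_neq0 newE]] := vadd_pvec_of_incident new_diag (gram_diag j) new_off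
  new_neq0 inc_i' inc_j'.
have old_i : lform (vadd (wvec (E i)) (wvec (E j))) (wvec (E i)) = 0.
  by rewrite lformDl gram_diag gram eq_sym (negbTE ij); ring.
have new_i : lform (vadd (wvec (E' i)) (wvec (E j))) (wvec (E i)) = -16.
  by rewrite lformDl new_row eqxx gram eq_sym (negbTE ij); ring.
move: old_i new_i; rewrite (lform_scalel _ oldE) (lform_scalel _ newE).
by move=> /eqP; rewrite mulf_eq0 (negbTE lam_neq0) => /eqP ->; rewrite mulr0; lra.
Qed.

Lemma replacev_revconf E i l : replacev (revconf E) i l = - replacev E i l.
Proof.
rewrite /replacev /revconf wvec_reverse.
by under eq_bigr => k _ do rewrite wvec_reverse; rewrite sumrN; ring.
Qed.

Lemma replacement_exists E i : oriented_descartes E ->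
  exists E', replacement E i E' /\ Wmat E' = Sgen R i *m Wmat E.
Proof.
move=> odE; case/oriented_descartesP: (odE) => [posE|posE].
  have [E' [posE' E'E E'iE]] := replace_positive i posE.
  exists E'; split; last exact: Wmat_replace.
  by apply: replacement_replacev => //; apply/oriented_descartesP; left.
have [E' [posE' E'E E'iE]] := replace_positive i posE.
have E'E' j : j != i -> revconf E' j = E j by move=> ji; rewrite /revconf E'E // reverseK.
have E'iE' : wvec (revconf E' i) =1 replacev E i.
  by move=> l; rewrite wvec_reverse E'iE replacev_revconf opprK.
exists (revconf E'); split; last exact: Wmat_replace.
by apply: replacement_replacev => //; apply/oriented_descartesP; right; rewrite revconfK.
Qed.

Lemma replacement_Sgen E i E' : replacement E i E' -> Wmat E' = Sgen R i *m Wmat E.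
Proof.
case=> odE odE' E'E not_same _; apply: Wmat_replace => // l.
have gram := oriented_descartes_gram odE; have gram' := oriented_descartes_gram odE'.
have [c cE] := rows_span gram (wvec (E' i)).
have row_gram j : lform (wvec (E' i)) (wvec (E j)) = 4 * c j - 2 * \sum_k c k.
  by rewrite (eq_lforml _ cE) lform_suml -sum_gram_row; apply: eq_bigr => k _; rewrite gram.
have off j : j != i -> 4 * c j - 2 * \sum_k c k = -2.
  by move=> ji; rewrite -row_gram -(E'E j ji) gram' eq_sym (negbTE ji).
have norm1 : \sum_j c j * (4 * c j - 2 * \sum_k c k) = 2.
  transitivity (lform (wvec (E' i)) (wvec (E' i))); last by rewrite gram' eqxx.
  rewrite [in RHS](eq_lformr _ cE) lformC lform_suml.
  by apply: eq_bigr => k _; rewrite lformC row_gram.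
case: (replacement_coords off norm1) => coords.
  exfalso; apply: not_same; suff -> : E' i = E i by [].
  have wfE := oriented_descartes_wf odE; have wfE' := oriented_descartes_wf odE'.
  apply: wvec_inj; [exact: (wfE' i) | exact: (wfE i) | move=> l'].
  rewrite cE (bigD1 i) //= big1 => [|k /negbTE ki]; last by rewrite coords ki mul0r.
  by rewrite coords eqxx mul1r addr0.
by rewrite cE replacevE; apply: eq_bigr => k _; rewrite coords.
Qed.

End Replacement.

Section Unordered.
Variable R : realType.
Implicit Types E : config R.
Local Notation sign := (sign R).
Local Notation spmx := (spmx R).

Lemma descartes_distinct E i j : descartes E -> i != j -> ~ same_circle (E i) (E j).
Proof.
case=> wfE tangent _ ij same; have [p] := tangent i j ij.
move/(tangent_atE _ (wfE i) (wfE j)) => [_ _ uniq].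
have [p1 [p2 [p12 inc1 inc2]]] := unit_two_points (wvec_lform_self (wfE i)).
have inc_j q : incident (wvec (E i)) q -> incident (wvec (E j)) q.
  by move/(on_circle_incident _ (wfE i))/same/(on_circle_incident _ (wfE j)).
by apply: p12; rewrite (uniq _ inc1 (inc_j _ inc1)) (uniq _ inc2 (inc_j _ inc2)).
Qed.

Lemma same_uu_match E E' : oriented_descartes E -> oriented_descartes E' -> same_uu E E' ->
  exists (f : 'I_4 -> 'I_4) (bs : 'I_4 -> bool),
    forall i l, wvec (E i) l = sign (bs i) * wvec (E' (f i)) l.
Proof.
move=> odE odE' [sameE _].
have match_i i : exists jb : 'I_4 * bool,
    forall l, wvec (E i) l = sign jb.2 * wvec (E' jb.1) l.
  have [j same] := sameE i.
  have [k [k_pm1 kE]] := same_circle_sign (oriented_descartes_wf odE i)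
    (oriented_descartes_wf odE' j) same.
  by case: k_pm1 => k_val; [exists (j, false) | exists (j, true)] => l /=;
    rewrite kE k_val /sign ?mul1r ?mulrN1 ?mulN1r ?opprK ?mulNr ?mul1r.
have [g gE] := fin_all_exists match_i.
by exists (fun i => (g i).1), (fun i => (g i).2).
Qed.

Lemma same_uu_spmx E E' : oriented_descartes E -> oriented_descartes E' -> same_uu E E' ->
  exists s b, Wmat E = spmx s b *m Wmat E'.
Proof.
move=> odE odE' same; have [f [bs fE]] := same_uu_match odE odE' same.
have gram := oriented_descartes_gram odE; have gram' := oriented_descartes_gram odE'.
have f_inj : injective f.
  move=> i1 i2 f12; apply/eqP; apply: contraT => i12; exfalso.
  apply: (descartes_distinct (proj1 odE) i12).
  have wfE := oriented_descartes_wf odE.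
  apply: (scale_same_circle (wfE i1) (wfE i2) (k := sign (bs i2) * sign (bs i1))) => [|l].
    by rewrite mulf_neq0 ?sign_neq0.
  by rewrite (fE i2) (fE i1) f12 -!mulrA; congr (_ * _); rewrite mulrA signK mul1r.
have bs_const i j : i != j -> bs i = bs j.
  move=> ij; have fij : f i != f j by rewrite (inj_eq f_inj).
  have := gram i j; rewrite (negbTE ij) (lform_scalel _ (fE i)) (lform_scaler _ (fE j)).
  by rewrite gram' (negbTE fij); case: (bs i); case: (bs j); rewrite /sign; lra.
exists (perm f_inj), (bs o0); apply/matrixP => a c.
rewrite spmx_mulE !WmatE permE fE.
by case: (eqVneq a o0) => [->|a0]; rewrite ?(bs_const _ _ a0).
Qed.

Lemma spmx_same_uu E E' s b : (forall i, wf_ocircle (E i)) -> (forall i, wf_ocircle (E' i)) ->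
  Wmat E = spmx s b *m Wmat E' -> same_uu E E'.
Proof.
move=> wfE wfE' WE.
have rowE i l : wvec (E' (s i)) l = sign b * wvec (E i) l.
  move/matrixP: WE => /(_ i l); rewrite spmx_mulE !WmatE => ->.
  by rewrite mulrA signK mul1r.
split=> [i|j]; first by exists (s i); apply: (scale_same_circle (wfE i) _ (sign_neq0 _ b)).
exists ((s^-1)%g j).
by have := scale_same_circle (wfE _) (wfE' _) (sign_neq0 _ b) (rowE ((s^-1)%g j)); rewrite permKV.
Qed.

Lemma Wmat_inj E E' : (forall i, wf_ocircle (E i)) -> (forall i, wf_ocircle (E' i)) ->
  Wmat E = Wmat E' -> E =1 E'.
Proof.
move=> wfE wfE' WE i; apply: wvec_inj => // l.
by move/matrixP: WE => /(_ i l); rewrite !WmatE.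
Qed.

Definition spconf (s : {perm 'I_4}) (b : bool) E : config R :=
  fun i => if b then reverse (E (s i)) else E (s i).

Lemma Wmat_spconf s b E : Wmat (spconf s b E) = spmx s b *m Wmat E.
Proof.
apply/matrixP => a c; rewrite spmx_mulE !WmatE /spconf.
by case: b; rewrite /sign ?wvec_reverse ?mulN1r ?mul1r.
Qed.

Lemma positive_gram_perm E (s : {perm 'I_4}) : positive_gram E -> positive_gram (E \o s).
Proof.
case=> wfE gram fut; split=> [i|a b|a b ab]; first exact: wfE.
  by rewrite /= gram (inj_eq perm_inj).
by apply: fut; rewrite (inj_eq perm_inj).
Qed.

Lemma oriented_descartes_spconf E s b : oriented_descartes E -> oriented_descartes (spconf s b E).
Proof.
move/oriented_descartesP => posE; apply/oriented_descartesP.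
have -> : spconf s b E = if b then revconf (E \o s) else E \o s by case: b.
case: b; case: posE => /(positive_gram_perm s) pos; rewrite ?revconfK; by [left|right].
Qed.

End Unordered.

Section Orbits.
Variable R : realType.
Implicit Types D E : config R.
Local Notation spmx := (spmx R).

Lemma in_F_oriented D D' : oriented_descartes D -> in_F D D' -> oriented_descartes D'.
Proof. by move=> odD; elim=> // E i E' _ _ []. Qed.

Lemma in_F_apollonian D D' : in_F D D' ->
  exists2 U, in_apollonian U & Wmat D' = U *m Wmat D.
Proof.
elim=> [|E i E' _ [U AU WE] rep]; first by exists 1%:M; [exact: apo1 | rewrite mul1mx].
by exists (Sgen R i *m U); [exact: apoS | rewrite (replacement_Sgen rep) WE mulmxA].
Qed.

Lemma apollonian_in_F D D' U : oriented_descartes D -> in_F D D' -> in_apollonian U ->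
  exists2 D'', in_F D D'' & Wmat D'' = U *m Wmat D'.
Proof.
move=> odD inF; move: U; apply: apollonian_ind => [|i U _ [D'' inF'' WD'']].
  by exists D'; rewrite ?mul1mx.
have [E [rep WE]] := replacement_exists i (in_F_oriented odD inF'').
by exists E; [exact: inF_step rep | rewrite WE WD'' mulmxA].
Qed.

Lemma apollonian_exists E U : oriented_descartes E -> in_apollonian U ->
  exists E', oriented_descartes E' /\ Wmat E' = U *m Wmat E.
Proof.
move=> odE; move: U; apply: apollonian_ind => [|i U _ [E1 [odE1 WE1]]].
  by exists E; rewrite mul1mx.
have [E' [[_ odE' _ _ _] WE']] := replacement_exists i odE1.
by exists E'; rewrite WE' WE1 mulmxA.
Qed.

Variables (D : config R).
Hypothesis odD : oriented_descartes D.

Lemma Wmat_cancel (A B : 'M[R]_4) : A *m Wmat D = B *m Wmat D -> A = B.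
Proof. exact: (can_inj (mulmxK (Wmat_unit (oriented_descartes_gram odD)))). Qed.

Lemma in_DP_apollonian E U E' : in_DP D E -> in_apollonian U ->
  oriented_descartes E' -> Wmat E' = U *m Wmat E -> in_DP D E'.
Proof.
move=> [odE [D1 [inF1 same1]]] AU odE' WE'; split=> //.
have [s [b WE]] := same_uu_spmx odE (in_F_oriented odD inF1) same1.
have [U' AU' UE] := apollonian_mul_spmx s b AU.
have [D2 inF2 WD2] := apollonian_in_F odD inF1 AU'.
exists D2; split=> //; apply: (@spmx_same_uu _ _ _ s b).
- exact: oriented_descartes_wf odE'.
- exact: oriented_descartes_wf (in_F_oriented odD inF2).
- by rewrite WE' WE mulmxA UE -mulmxA WD2.
Qed.

Lemma in_DP_spconf s b : in_DP D (spconf s b D).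
Proof.
split; first exact: oriented_descartes_spconf.
exists D; split; first exact: inF_refl.
apply: (@spmx_same_uu _ _ _ s b); rewrite ?Wmat_spconf //.
- exact: oriented_descartes_wf (oriented_descartes_spconf s b odD).
- exact: oriented_descartes_wf.
Qed.

Lemma apo_orbit_spconf_inj s1 b1 s2 b2 E :
  apo_orbit (spconf s1 b1 D) E -> apo_orbit (spconf s2 b2 D) E -> s1 = s2 /\ b1 = b2.
Proof.
move=> [_ [U1 [AU1 WE1]]] [_ [U2 [AU2 WE2]]].
apply: (spmx_apollonian_inj AU1 AU2); apply: Wmat_cancel.
by rewrite -!mulmxA -!Wmat_spconf -WE1 -WE2.
Qed.

Lemma in_DP_orbit E : in_DP D E <-> exists s b, apo_orbit (spconf s b D) E.
Proof.
split=> [[odE [D1 [inF1 same1]]] | [s [b [odE [U [AU WE]]]]]].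
  have [s [b WE]] := same_uu_spmx odE (in_F_oriented odD inF1) same1.
  have [U AU WD1] := in_F_apollonian inF1.
  have [U' AU' UE] := spmx_mul_apollonian s b AU.
  exists s, b; split=> //; exists U'; split=> //.
  by rewrite Wmat_spconf WE WD1 mulmxA UE mulmxA.
exact: in_DP_apollonian (in_DP_spconf s b) AU odE WE.
Qed.

Lemma orbit_unique_rep s b D' : in_F D D' ->
  exists E, [/\ apo_orbit (spconf s b D) E, same_uu E D' &
    forall E2, apo_orbit (spconf s b D) E2 -> same_uu E2 D' -> forall i, E2 i = E i].
Proof.
move=> inF; have odD' := in_F_oriented odD inF.
have [U AU WD'] := in_F_apollonian inF.
have [U' AU' UE] := spmx_mul_apollonian s b AU.
exists (spconf s b D'); split.
- split; first exact: oriented_descartes_spconf.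
  by exists U'; split; rewrite // !Wmat_spconf WD' mulmxA UE mulmxA.
- apply: (@spmx_same_uu _ _ _ s b); rewrite ?Wmat_spconf //.
  + exact: oriented_descartes_wf (oriented_descartes_spconf s b odD').
  + exact: oriented_descartes_wf.
- move=> E2 [odE2 [U2 [AU2 WE2]]] same2.
  have [s2 [b2 WE2']] := same_uu_spmx odE2 odD' same2.
  have [U3 AU3 UE3] := spmx_mul_apollonian s2 b2 AU.
  have [<- <-] : s2 = s /\ b2 = b.
    apply: (spmx_apollonian_inj AU3 AU2); apply: Wmat_cancel.
    by rewrite -UE3 -mulmxA -WD' -WE2' WE2 Wmat_spconf mulmxA.
  apply: Wmat_inj; rewrite ?Wmat_spconf //.
  + exact: oriented_descartes_wf.
  + exact: oriented_descartes_wf (oriented_descartes_spconf s2 b2 odD').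
Qed.

End Orbits.

Lemma card_orbit_labels : #|{: {perm 'I_4} * bool}| = 48.
Proof. by rewrite card_prod card_Sn card_bool. Qed.

Definition orbit_label (k : 'I_48) : {perm 'I_4} * bool :=
  enum_val (cast_ord (esym card_orbit_labels) k).

Lemma orbit_label_bij : bijective orbit_label.
Proof.
exists (fun t => cast_ord card_orbit_labels (enum_rank t)) => [k|t].
  by rewrite /orbit_label enum_valK cast_ordKV.
by rewrite /orbit_label cast_ordK enum_rankK.
Qed.

Theorem theorem4p3 (R : realType) (D : config R) :
  oriented_descartes D -> pos_oriented D ->
  (* invariance of DD(P) under the Apollonian group *)
  (forall (E : config R) (U : 'M[R]_4), in_DP D E -> in_apollonian U ->
     (exists E' : config R, oriented_descartes E' /\ Wmat E' = U *m Wmat E) /\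
     (forall E' : config R, oriented_descartes E' -> Wmat E' = U *m Wmat E ->
        in_DP D E')) /\
  (* DD(P) is the union of exactly 48 (pairwise distinct, hence disjoint)
     orbits, each containing exactly one ordered, oriented representative of
     each unordered, unoriented configuration underlying a member of F(D) *)
  (exists reps : 'I_48 -> config R,
     [/\ forall k, in_DP D (reps k),
         forall k l, k != l -> forall E,
           ~ (apo_orbit (reps k) E /\ apo_orbit (reps l) E),
         forall E, in_DP D E <-> exists k, apo_orbit (reps k) E &
         forall k D', in_F D D' ->
           exists E, [/\ apo_orbit (reps k) E, same_uu E D' &
             forall E2, apo_orbit (reps k) E2 -> same_uu E2 D' ->
               forall i, E2 i = E i]]).
Proof.
move=> odD _; split=> [E U inDP AU|].
  by split=> [|E']; [exact: apollonian_exists (proj1 inDP) AU | exact: in_DP_apollonian].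
have [label_inv _ labelKV] := orbit_label_bij.
exists (fun k => spconf (orbit_label k).1 (orbit_label k).2 D); split.
- by move=> k; apply: in_DP_spconf.
- move=> k l /negP kl E [orb_k orb_l]; apply/kl/eqP/(bij_inj orbit_label_bij).
  move: (apo_orbit_spconf_inj odD orb_k orb_l).
  by case: (orbit_label k) (orbit_label l) => [s1 b1] [s2 b2] /= [-> ->].
- move=> E; rewrite in_DP_orbit //; split=> [[s [b orb]]|[k orb]].
    by exists (label_inv (s, b)); rewrite labelKV.
  by exists (orbit_label k).1, (orbit_label k).2.
- by move=> k D' inF; apply: orbit_unique_rep.
Qed.
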